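(* For every prime power $q$, the number $I_{\mathrm{H}}(q)$ of $\mathbb{F}_q$-isomorphism classes of Hessian curves over $\mathbb{F}_q$ is $\lfloor (q+11)/12\rfloor$ if $q\equiv1\pmod3$, and $q-1$ if $q\equiv0,2\pmod3$.
   Context: For $u\in\mathbb{F}_q$ with $u^3\ne27$, the Hessian curve $E_{\mathrm{H},u}$ is the elliptic curve $X^3+Y^3+1=uXY$. Two such curves are $\mathbb{F}_q$-isomorphic if they are birationally equivalent over $\mathbb{F}_q$ (equivalently, their Weierstrass models are isomorphic via a Weierstrass change of variables with coefficients in $\mathbb{F}_q$). $I_{\mathrm{H}}(q)$ is the number of equivalence classes of $\{E_{\mathrm{H},u}: u\in\mathbb{F}_q,\ u^3\ne27\}$ under $\mathbb{F}_q$-isomorphism. *)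

From HB Require Import structures.
From mathcomp Require Import all_boot all_order all_algebra all_field.
Set Implicit Arguments. Unset Strict Implicit. Unset Printing Implicit Defensive.
Import GRing.Theory.
Local Open Scope ring_scope.

(* Two long Weierstrass equations
     y^2 + a1 xy + a3 y = x^3 + a2 x^2 + a4 x + a6
   over F are F-isomorphic iff there is an admissible change of variables
   x = w^2 x' + r, y = w^3 y' + w^2 s x' + t with w <> 0 and r, s, t in F
   carrying the first to the second (Silverman, AEC, Table 3.1). *)
Definition weier_iso (F : finFieldType) (a1 a2 a3 a4 a6 b1 b2 b3 b4 b6 : F) : bool :=
  [exists w : F, exists r : F, exists s : F, exists t : F,
    [&& w != 0,
        w * b1 == a1 + 2 * s,
        w ^+ 2 * b2 == a2 - s * a1 + 3 * r - s ^+ 2,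
        w ^+ 3 * b3 == a3 + r * a1 + 2 * t,
        w ^+ 4 * b4 == a4 - s * a3 + 2 * r * a2 - (t + r * s) * a1
                        + 3 * r ^+ 2 - 2 * s * t &
        w ^+ 6 * b6 == a6 + r * a4 + r ^+ 2 * a2 + r ^+ 3 - t * a3
                        - t ^+ 2 - r * t * a1]].

(* Weierstrass model of the Hessian curve X^3 + Y^3 + 1 = u X Y (valid in every
   characteristic, u^3 <> 27):  y^2 + (u+6) x y + (u^2+3u+9) y = x^3.
   It is obtained from the projective linear change of coordinates
     x = X+Y+Z, y = uX+3Y+3Z, z = 3X+3Y+uZ
   (determinant -(u-3)^2, nonzero when u^3 <> 27), using the identity
     (u-3)^2 (X^3+Y^3+Z^3-uXYZ) = (u^2+3u+9) x^3 + y^2 z - (u+6) xyz + y z^2,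
   followed by a scaling of coordinates. *)
Definition hess_a1 (F : finFieldType) (u : F) : F := u + 6.
Definition hess_a3 (F : finFieldType) (u : F) : F := u ^+ 2 + 3 * u + 9.

Definition hess_iso (F : finFieldType) (u v : F) : bool :=
  weier_iso (hess_a1 u) 0 (hess_a3 u) 0 0 (hess_a1 v) 0 (hess_a3 v) 0 0.

Definition hess_params (F : finFieldType) : {set F} := [set u : F | u ^+ 3 != 27].

Definition I_H (F : finFieldType) : nat :=
  #|[set [set v in hess_params F | hess_iso u v] | u in hess_params F]|.

(* Isomorphic curves have equal j-invariants, and the j-invariant of E_{H,u} is rho(u)^3
   with rho(u) = u (u^3 + 216) / (u^3 - 27).

   If F contains a primitive cube root of unity o (equivalently q = 1 mod 3), the maps
   u |-> o u and u |-> tau(u) = 3 (u + 6) / (u - 3) are induced by isomorphisms, and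
   rho(o u) = o rho(u), rho(tau u) = rho(u).  The four points u, tau u, o tau(o^2 u),
   o^2 tau(o u) exhaust the fibre of rho through u, so the classes are exactly the level
   sets of rho^3.  The fibres of rho have four points except over the at most six roots of
   u^6 - 540 u^3 - 5832, and y |-> y^3 is three-to-one away from 0 on the image of rho,
   which is stable under multiplication by o.  So the image Y of the q - 3 admissible
   parameters satisfies q - 3 <= 4 #Y <= q + 3 and #Y + 2 = 3 #{y^3 | y in Y}, which
   forces floor((q + 11) / 12) classes.

   Otherwise (characteristic 3, or no nontrivial cube root of unity) a direct analysis of
   the change-of-variables equations shows that E_{H,u} and E_{H,v} are isomorphic only
   when u = v, and there are q - 1 admissible parameters. *)

From HB Require Import structures.
From mathcomp Require Import all_boot all_order all_algebra all_field all_fingroup all_solvable.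
From mathcomp Require Import ring zify.
Set Implicit Arguments. Unset Strict Implicit. Unset Printing Implicit Defensive.
Import GRing.Theory FinRing.Theory.
Local Open Scope ring_scope.

Lemma eq_sub_eq0 (R : zmodType) (x y z : R) : x = y -> z = x - y -> z = 0.
Proof. by move=> -> ->; rewrite subrr. Qed.

Lemma cube_neq27E (F : idomainType) (u : F) :
  (u ^+ 3 != 27) = (u != 3) && (u ^+ 2 + 3 * u + 9 != 0).
Proof.
rewrite -subr_eq0 (_ : _ - _ = (u - 3) * (u ^+ 2 + 3 * u + 9)); last by ring.
by rewrite mulf_eq0 negb_or subr_eq0.
Qed.

Section WeierstrassInvariants.
Variable R : comRingType.

Definition weier_change (a1 a2 a3 a4 a6 b1 b2 b3 b4 b6 w r s t : R) : Prop :=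
  [/\ w * b1 = a1 + 2 * s,
      w ^+ 2 * b2 = a2 - s * a1 + 3 * r - s ^+ 2,
      w ^+ 3 * b3 = a3 + r * a1 + 2 * t,
      w ^+ 4 * b4 = a4 - s * a3 + 2 * r * a2 - (t + r * s) * a1
                      + 3 * r ^+ 2 - 2 * s * t &
      w ^+ 6 * b6 = a6 + r * a4 + r ^+ 2 * a2 + r ^+ 3 - t * a3
                      - t ^+ 2 - r * t * a1].

Definition weier_c4 (a1 a2 a3 a4 a6 : R) : R :=
  let b2 := a1 ^+ 2 + 4 * a2 in let b4 := 2 * a4 + a1 * a3 in
  b2 ^+ 2 - 24 * b4.

Definition weier_disc (a1 a2 a3 a4 a6 : R) : R :=
  let b2 := a1 ^+ 2 + 4 * a2 in let b4 := 2 * a4 + a1 * a3 in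
  let b6 := a3 ^+ 2 + 4 * a6 in
  let b8 := a1 ^+ 2 * a6 + 4 * a2 * a6 - a1 * a3 * a4 + a2 * a3 ^+ 2 - a4 ^+ 2 in
  - b2 ^+ 2 * b8 - 8 * b4 ^+ 3 - 27 * b6 ^+ 2 + 9 * b2 * b4 * b6.

Lemma weier_change_c4 (a1 a2 a3 a4 a6 b1 b2 b3 b4 b6 w r s t : R) :
  weier_change a1 a2 a3 a4 a6 b1 b2 b3 b4 b6 w r s t ->
  w ^+ 4 * weier_c4 b1 b2 b3 b4 b6 = weier_c4 a1 a2 a3 a4 a6.
Proof.
case=> e1 e2 e3 e4 e6.
have -> : w ^+ 4 * weier_c4 b1 b2 b3 b4 b6 =
    weier_c4 (w * b1) (w ^+ 2 * b2) (w ^+ 3 * b3) (w ^+ 4 * b4) (w ^+ 6 * b6).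
  by rewrite /weier_c4; ring.
by rewrite e1 e2 e3 e4 e6 /weier_c4; ring.
Qed.

Lemma weier_change_disc (a1 a2 a3 a4 a6 b1 b2 b3 b4 b6 w r s t : R) :
  weier_change a1 a2 a3 a4 a6 b1 b2 b3 b4 b6 w r s t ->
  w ^+ 12 * weier_disc b1 b2 b3 b4 b6 = weier_disc a1 a2 a3 a4 a6.
Proof.
case=> e1 e2 e3 e4 e6.
have -> : w ^+ 12 * weier_disc b1 b2 b3 b4 b6 =
    weier_disc (w * b1) (w ^+ 2 * b2) (w ^+ 3 * b3) (w ^+ 4 * b4) (w ^+ 6 * b6).
  by rewrite /weier_disc; ring.
by rewrite e1 e2 e3 e4 e6 /weier_disc; ring.
Qed.

End WeierstrassInvariants.

Section WeierstrassIso.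
Variable F : finFieldType.

Lemma weier_isoP (a1 a2 a3 a4 a6 b1 b2 b3 b4 b6 : F) :
  reflect (exists w r s t, w != 0 /\ weier_change a1 a2 a3 a4 a6 b1 b2 b3 b4 b6 w r s t)
          (weier_iso a1 a2 a3 a4 a6 b1 b2 b3 b4 b6).
Proof.
apply: (iffP existsP) => [[w /existsP [r /existsP [s /existsP [t]]]] | ].
  case/andP=> w_neq0 /and5P [/eqP e1 /eqP e2 /eqP e3 /eqP e4 /eqP e6].
  by exists w, r, s, t.
move=> [w [r [s [t [w_neq0 [e1 e2 e3 e4 e6]]]]]].
exists w; apply/existsP; exists r; apply/existsP; exists s; apply/existsP; exists t.
by rewrite w_neq0 e1 e2 e3 e4 e6 !eqxx.
Qed.

Lemma weier_iso_trans (a1 a2 a3 a4 a6 b1 b2 b3 b4 b6 c1 c2 c3 c4 c6 : F) :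
  weier_iso a1 a2 a3 a4 a6 b1 b2 b3 b4 b6 ->
  weier_iso b1 b2 b3 b4 b6 c1 c2 c3 c4 c6 ->
  weier_iso a1 a2 a3 a4 a6 c1 c2 c3 c4 c6.
Proof.
move=> /weier_isoP [w1 [r1 [s1 [t1 [w1_neq0 [e1 e2 e3 e4 e6]]]]]].
move=> /weier_isoP [w2 [r2 [s2 [t2 [w2_neq0 [f1 f2 f3 f4 f6]]]]]].
apply/weier_isoP; exists (w1 * w2), (r1 + w1 ^+ 2 * r2), (s1 + w1 * s2),
  (t1 + w1 ^+ 3 * t2 + s1 * w1 ^+ 2 * r2); split; first by rewrite mulf_neq0.
have unscale (x y z : F) k : x != 0 -> x ^+ k * y = z -> y = z / x ^+ k.
  by move=> x_neq0 <-; rewrite [_ * y]mulrC mulfK ?expf_neq0.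
rewrite -(expr1 w1) in e1; rewrite -(expr1 w2) in f1.
move: f1 f2 f3 f4 f6 => /(unscale _ _ _ _ w2_neq0)-> /(unscale _ _ _ _ w2_neq0)->
  /(unscale _ _ _ _ w2_neq0)-> /(unscale _ _ _ _ w2_neq0)-> /(unscale _ _ _ _ w2_neq0)->.
move: e1 e2 e3 e4 e6 => /(unscale _ _ _ _ w1_neq0)-> /(unscale _ _ _ _ w1_neq0)->
  /(unscale _ _ _ _ w1_neq0)-> /(unscale _ _ _ _ w1_neq0)-> /(unscale _ _ _ _ w1_neq0)->.
by split; field; rewrite w1_neq0 w2_neq0.
Qed.

End WeierstrassIso.

Section HessianChange.
Variable R : comRingType.

Definition hess_change (u v w r s t : R) : Prop :=
  [/\ w * (v + 6) = u + 6 + 2 * s,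
      3 * r = s ^+ 2 + s * (u + 6),
      w ^+ 3 * (v ^+ 2 + 3 * v + 9) = u ^+ 2 + 3 * u + 9 + r * (u + 6) + 2 * t,
      3 * r ^+ 2 = s * (u ^+ 2 + 3 * u + 9) + (t + r * s) * (u + 6) + 2 * s * t &
      r ^+ 3 = t * (u ^+ 2 + 3 * u + 9) + t ^+ 2 + r * t * (u + 6)].

(* Composition with the negation map [(x, y) |-> (x, - y - a1 x - a3)] of the source curve. *)
Lemma hess_change_neg (u v w r s t : R) : hess_change u v w r s t ->
  hess_change u v (- w) r (- (u + 6) - s) (- (u ^+ 2 + 3 * u + 9) - t - r * (u + 6)).
Proof.
case=> e1 e2 e3 e4 e6; split.
- by rewrite mulNr e1; ring.
- by rewrite e2; ring.
- by rewrite exprNn -mulrA e3; ring.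
- by rewrite e4; ring.
- by rewrite e6; ring.
Qed.

(* Eliminating [s] and [t] from the equations leaves a cubic condition on [r]. *)
Lemma hess_change_resultant (u v w r s t : R) : hess_change u v w r s t ->
  r * (3 * r + (u ^+ 2 + 3 * u + 9)) *
    (r ^+ 2 + (3 * u + 9) * r + 3 * (u ^+ 2 + 3 * u + 9)) = 0.
Proof.
case=> _ e2 _ e4 e6.
rewrite (_ : _ * _ =
    (3 * r - (s ^+ 2 + s * (u + 6))) *
      (u ^+ 4 + 2 * u ^+ 3 * r + 6 * u ^+ 3 + u ^+ 2 * r ^+ 2 + 18 * u ^+ 2 * r
       + 27 * u ^+ 2 + 12 * u * r ^+ 2 + 54 * u * r + 54 * u + 4 * r ^+ 3
       + 36 * r ^+ 2 + 108 * r + 81)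
  + (u + 6 + 2 * s) ^+ 2 *
      (r ^+ 3 - (t * (u ^+ 2 + 3 * u + 9) + t ^+ 2 + r * t * (u + 6)))
  - (3 * r ^+ 2 - (s * (u ^+ 2 + 3 * u + 9) + (t + r * s) * (u + 6) + 2 * s * t)) *
      (3 * r ^+ 2 - s * (u ^+ 2 + 3 * u + 9) - r * s * (u + 6)
       + (t + r * (u + 6) + u ^+ 2 + 3 * u + 9) * (u + 6 + 2 * s))); last by ring.
by rewrite -e2 -e4 -e6 !subrr; ring.
Qed.

End HessianChange.

(* [hess_rho u ^+ 3 = c4 ^+ 3 / disc] is the j-invariant of E_{H,u}. *)
Definition hess_rho {F : fieldType} (u : F) : F := u * (u ^+ 3 + 216) / (u ^+ 3 - 27).

Section HessianIso.
Variable F : finFieldType.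

Lemma hess_changeE (u v w r s t : F) :
  weier_change (hess_a1 u) 0 (hess_a3 u) 0 0 (hess_a1 v) 0 (hess_a3 v) 0 0 w r s t <->
  hess_change u v w r s t.
Proof.
rewrite /hess_a1 /hess_a3; split=> -[e1 e2 e3 e4 e6]; split=> //.
- by apply: subr0_eq; rewrite -[RHS](mulr0 (w ^+ 2)) e2; ring.
- by apply: subr0_eq; rewrite -[RHS](mulr0 (w ^+ 4)) e4; ring.
- by apply: subr0_eq; rewrite -[RHS](mulr0 (w ^+ 6)) e6; ring.
- by rewrite mulr0 -[LHS](subrr (3 * r)) {2}e2; ring.
- by rewrite mulr0 -[LHS](subrr (3 * r ^+ 2)) {2}e4; ring.
- by rewrite mulr0 -[LHS](subrr (r ^+ 3)) {2}e6; ring.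
Qed.

Lemma hess_isoP (u v : F) :
  reflect (exists w r s t, w != 0 /\ hess_change u v w r s t) (hess_iso u v).
Proof.
apply: (iffP (weier_isoP _ _ _ _ _ _ _ _ _ _)) => -[w [r [s [t [w_neq0 /hess_changeE]]]]];
  by exists w, r, s, t.
Qed.

Lemma hess_iso_refl (u : F) : hess_iso u u.
Proof. by apply/hess_isoP; exists 1, 0, 0, 0; split; [exact: oner_neq0 | split; ring]. Qed.

Lemma hess_iso_trans (u v x : F) : hess_iso u v -> hess_iso v x -> hess_iso u x.
Proof. exact: weier_iso_trans. Qed.

Lemma hess_c4 (u : F) : weier_c4 (hess_a1 u) 0 (hess_a3 u) 0 0 = u * (u ^+ 3 + 216).
Proof. by rewrite /weier_c4 /hess_a1 /hess_a3; ring. Qed.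

Lemma hess_disc (u : F) : weier_disc (hess_a1 u) 0 (hess_a3 u) 0 0 = (u ^+ 3 - 27) ^+ 3.
Proof. by rewrite /weier_disc /hess_a1 /hess_a3; ring. Qed.

Lemma hess_iso_rho (u v : F) : u ^+ 3 != 27 -> v ^+ 3 != 27 ->
  hess_iso u v -> hess_rho u ^+ 3 = hess_rho v ^+ 3.
Proof.
move=> hu hv /weier_isoP [w [r [s [t [_ huv]]]]].
have c4 := weier_change_c4 huv; have disc := weier_change_disc huv.
rewrite !hess_c4 in c4; rewrite !hess_disc in disc.
rewrite /hess_rho !expr_div_n; apply/eqP; rewrite eqr_div ?expf_neq0 ?subr_eq0 //.
by rewrite -c4 -disc; apply/eqP; ring.
Qed.

End HessianIso.

Section NoCubeRootOfUnity.
Variable F : fieldType.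
Hypothesis no_omega : forall z : F, z ^+ 3 = 1 -> z = 1.

Lemma cube_inj : injective (fun x : F => x ^+ 3).
Proof.
move=> x y /= e; have [y0 | y_neq0] := eqVneq y 0.
  by move: e; rewrite y0 expr0n /= => /eqP; rewrite expf_eq0 /= => /eqP.
rewrite -(divfK y_neq0 x) (@no_omega (x / y)) ?mul1r //.
by rewrite expr_div_n e divff ?expf_neq0.
Qed.

Lemma cube_eq27 (u : F) : (u ^+ 3 == 27) = (u == 3).
Proof. by rewrite (_ : 27 = 3 ^+ 3 :> F) ?(inj_eq cube_inj) //; ring. Qed.

Section CharNot3.
Hypothesis three_neq0 : (3 : F) != 0.

Lemma eisenstein_norm_neq0 (a b : F) : b != 0 -> a ^+ 2 + a * b + b ^+ 2 != 0.
Proof.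
move=> b_neq0; apply/eqP => norm0.
have ab : a = b.
  apply: cube_inj; apply/eqP; rewrite /= -subr_eq0.
  rewrite (_ : _ - _ = (a - b) * (a ^+ 2 + a * b + b ^+ 2)); last by ring.
  by rewrite norm0 mulr0.
move: norm0; rewrite ab (_ : _ + _ = 3 * b ^+ 2); last by ring.
by move/eqP; rewrite mulf_eq0 expf_eq0 (negbTE three_neq0) (negbTE b_neq0).
Qed.

Lemma hess_quad_neq0 (u r : F) : u ^+ 3 != 27 ->
  r ^+ 2 + (3 * u + 9) * r + 3 * (u ^+ 2 + 3 * u + 9) != 0.
Proof.
rewrite cube_neq27E => /andP [u_neq3 B_neq0]; set B := u ^+ 2 + 3 * u + 9; apply/eqP => quad0.
have [B_ur | B_ur] := eqVneq (B + u * r) 0.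
  have : B * (u - 3) ^+ 2 = 0.
    rewrite (_ : _ * _ = u ^+ 2 * (r ^+ 2 + (3 * u + 9) * r + 3 * B)
                        - (B + u * r) * (u * r + (3 * u + 9) * u - B)); last by rewrite /B; ring.
    by rewrite quad0 B_ur mulr0 mul0r subrr.
  by move/eqP; rewrite mulf_eq0 expf_eq0 subr_eq0 (negbTE B_neq0) (negbTE u_neq3).
move: (eisenstein_norm_neq0 (3 * r + B) B_ur).
rewrite (_ : _ + _ + _ = B * (r ^+ 2 + (3 * u + 9) * r + 3 * B)); last by rewrite /B; ring.
by rewrite quad0 mulr0 eqxx.
Qed.

Lemma hess_change_scale_eq (u v w : F) : u != 3 -> w * (v + 6) = u + 6 ->
  w ^+ 3 * (v ^+ 2 + 3 * v + 9) = u ^+ 2 + 3 * u + 9 -> v = u.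
Proof.
move=> u_neq3 e1 e3.
have : (1 - w) * (27 * w ^+ 2 + (27 - 9 * (u + 6)) * w + (u ^+ 2 + 3 * u + 9))
       = u ^+ 2 + 3 * u + 9 - w ^+ 3 * (v ^+ 2 + 3 * v + 9).
  have -> : u = w * (v + 6) - 6 by rewrite e1; ring.
  ring.
rewrite e3 subrr => /eqP; rewrite mulf_eq0 => /orP [| /eqP quad0].
  by rewrite subr_eq0 => /eqP w1; move: e1; rewrite -w1 mul1r => /addIr.
have := @eisenstein_norm_neq0 (9 * w - 2 * u - 3) (u - 3).
rewrite subr_eq0 => /(_ u_neq3); rewrite (_ : _ + _ + _ = 3 * (27 * w ^+ 2
  + (27 - 9 * (u + 6)) * w + (u ^+ 2 + 3 * u + 9))); last by ring.
by rewrite quad0 mulr0 eqxx.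
Qed.

Variables u v : F.
Hypothesis hu : u ^+ 3 != 27.

Lemma hess_change_r0_s0 (w t : F) : w != 0 -> hess_change u v w 0 0 t -> v = u.
Proof.
have u_neq3 : u != 3 by move: hu; rewrite cube_neq27E => /andP [].
move=> w_neq0 [e1 _ e3 e4 _].
have /eqP : t * (u + 6) = 0 by apply: (eq_sub_eq0 (esym e4)); ring.
rewrite mulf_eq0 => /orP [/eqP t0 | /eqP A0].
  apply: (hess_change_scale_eq (w := w) u_neq3); first by rewrite e1; ring.
  by rewrite e3 t0; ring.
move: e1; rewrite A0 mulr0 addr0 => /eqP; rewrite mulf_eq0 (negbTE w_neq0) /= -A0.
by move/eqP; apply: addIr.
Qed.

Lemma hess_change_r0 (w s t : F) : w != 0 -> hess_change u v w 0 s t -> v = u.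
Proof.
move=> w_neq0 huv; have [_ e2 _ _ _] := huv.
have /eqP : s * (s + (u + 6)) = 0 by apply: (eq_sub_eq0 (esym e2)); ring.
rewrite mulf_eq0 => /orP [/eqP s0 | /eqP sA].
  by rewrite s0 in huv; apply: hess_change_r0_s0 huv.
have := hess_change_neg huv; rewrite (_ : - (u + 6) - s = - (s + (u + 6))); last by ring.
by rewrite sA oppr0; apply: hess_change_r0_s0; rewrite oppr_eq0.
Qed.

Lemma hess_change_rB_neq0 (w r s t : F) : hess_change u v w r s t ->
  3 * r + (u ^+ 2 + 3 * u + 9) != 0.
Proof.
case=> _ e2 _ _ e6; apply/eqP => rB.
have sq : s ^+ 2 + (u + 6) * s + (u ^+ 2 + 3 * u + 9) = 0 by rewrite -rB e2; ring.
have [u0 | u_neq0] := eqVneq u 0; last first.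
  move: (eisenstein_norm_neq0 (s + 3) u_neq0).
  rewrite (_ : _ + _ + _ = s ^+ 2 + (u + 6) * s + (u ^+ 2 + 3 * u + 9)); last by ring.
  by rewrite sq eqxx.
have r3 : r = -3 by apply: (mulfI three_neq0); rewrite -[LHS]subr0 -rB u0; ring.
move: (eisenstein_norm_neq0 (t - 6) three_neq0).
rewrite (_ : _ + _ + _ = t * (u ^+ 2 + 3 * u + 9) + t ^+ 2 + r * t * (u + 6) - r ^+ 3).
  by rewrite -e6 subrr eqxx.
by rewrite r3 u0; ring.
Qed.

Lemma hess_change_rigid (w r s t : F) : w != 0 -> hess_change u v w r s t -> v = u.
Proof.
move=> w_neq0 huv; have /eqP := hess_change_resultant huv.
rewrite !mulf_eq0 (negbTE (hess_change_rB_neq0 huv)) (negbTE (hess_quad_neq0 r hu)).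
by rewrite !orbF => /eqP r0; rewrite r0 in huv; apply: hess_change_r0 huv.
Qed.

End CharNot3.
End NoCubeRootOfUnity.

Section Char3.
Variable F : fieldType.
Hypothesis three0 : (3 : F) = 0.

Lemma hess_change_char3_s0 (u v w r t : F) : u != 0 -> hess_change u v w r 0 t -> v = u.
Proof.
move=> u_neq0; have six0 : (6 : F) = 0.
  by rewrite (_ : 6 = 3 * 2 :> F); [rewrite three0 mul0r | ring].
have nine0 : (9 : F) = 0 by rewrite (_ : 9 = 3 * 3 :> F); [rewrite three0 mul0r | ring].
rewrite /hess_change three0 six0 nine0 => -[e1 _ e3 e4 e6].
have /eqP : t * u = 0 by apply: (eq_sub_eq0 (esym e4)); ring.
rewrite mulf_eq0 (negbTE u_neq0) orbF => /eqP t0.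
have /eqP : r ^+ 3 = 0 by rewrite e6 t0; ring.
rewrite expf_eq0 /= => /eqP r0.
have wv : w * v = u by move: e1; rewrite mulr0 !addr0.
have w3v2 : w ^+ 3 * v ^+ 2 = u ^+ 2.
  by apply: subr0_eq; apply: (eq_sub_eq0 e3); rewrite r0 t0; ring.
have /eqP : u ^+ 2 * (w - 1) = 0 by apply: (eq_sub_eq0 w3v2); rewrite -wv; ring.
by rewrite mulf_eq0 expf_eq0 (negbTE u_neq0) subr_eq0 => /eqP w1; rewrite -wv w1 mul1r.
Qed.

Lemma hess_change_char3 (u v w r s t : F) : u != 0 -> hess_change u v w r s t -> v = u.
Proof.
move=> u_neq0 huv; have [_ e2 _ _ _] := huv.
have six0 : (6 : F) = 0 by rewrite (_ : 6 = 3 * 2 :> F); [rewrite three0 mul0r | ring].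
have /eqP : s * (s + u) = 0.
  by apply: (eq_sub_eq0 (esym e2)); rewrite three0 six0; ring.
rewrite mulf_eq0 => /orP [/eqP s0 | /eqP su].
  by rewrite s0 in huv; apply: hess_change_char3_s0 huv.
have := hess_change_neg huv; rewrite (_ : - (u + 6) - s = - (s + u) - 6); last by ring.
by rewrite su six0 oppr0 addr0; apply: hess_change_char3_s0.
Qed.

End Char3.

(* The [x] over which two points of the fibre [hess_fibre x] below collide. *)
Definition hess_branch (F : fieldType) (x : F) : F := x ^+ 6 - 540 * x ^+ 3 - 5832.

Definition hess_tau (F : fieldType) (x : F) : F := 3 * (x + 6) / (x - 3).

Section CubeRootOfUnity.
Variable F : fieldType.
Variable o : F.
Hypothesis o3 : o ^+ 3 = 1.
Hypothesis o_neq1 : o != 1.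

Lemma omega_sqr : o * o = - o - 1.
Proof.
have /eqP : (o - 1) * (o * o + o + 1) = 0.
  rewrite (_ : (o - 1) * _ = o ^+ 3 - 1); last by ring.
  by rewrite o3 subrr.
rewrite mulf_eq0 subr_eq0 (negbTE o_neq1) /= => /eqP o2.
by apply: subr0_eq; rewrite -o2; ring.
Qed.

Lemma omega_three_neq0 : (3 : F) != 0.
Proof.
apply/eqP => three0; move/eqP: o_neq1; apply.
have /eqP : (o - 1) ^+ 3 = 0.
  rewrite (_ : _ ^+ 3 = o ^+ 3 - 1 - 3 * (o ^+ 2 - o)); last by ring.
  by rewrite o3 three0 mul0r subrr subr0.
by rewrite expf_eq0 /= subr_eq0 => /eqP.
Qed.

Lemma hess_change_omega (x : F) :
  hess_change x (o * x) (o ^+ 2) (- 3 + 3 * o - (2 + o) * x) (- 6 - 3 * o)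
    (9 - 9 * o + (6 + 3 * o) * x).
Proof. by split; ring: omega_sqr. Qed.

Lemma hess_change_tau (x : F) : x != 3 ->
  hess_change x (hess_tau x) ((1 + 2 * o) * (3 - x) / 9) (- (x ^+ 2 + 3 * x + 9) / 3)
    (- 3 + o ^+ 2 * x) (3 - 3 * o + 3 * x + x ^+ 2 + (2 + o) * x ^+ 3 / 9).
Proof.
move=> x_neq3; have x3 : x - 3 != 0 by rewrite subr_eq0.
have three := omega_three_neq0.
have nine : (9 : F) != 0 by rewrite (_ : 9 = 3 * 3 :> F) ?mulf_neq0 //; ring.
by rewrite /hess_tau; split; field: omega_sqr; rewrite ?x3 ?three ?nine.
Qed.

Lemma omega_neq0 : o != 0.
Proof. by apply: contra_eq_neq o3 => ->; rewrite expr0n eq_sym oner_neq0. Qed.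

Lemma omega_sqr_neq1 : o ^+ 2 != 1.
Proof. by apply: contra_neq o_neq1 => o2; rewrite -{1}[o]mul1r -{1}o2 -exprSr o3. Qed.

Lemma omega_sqr_neq : o ^+ 2 != o.
Proof. by rewrite expr2 -{3}[o]mulr1 (inj_eq (mulfI omega_neq0)). Qed.

Lemma cubeM_omega (x : F) : (o * x) ^+ 3 = x ^+ 3.
Proof. by rewrite exprMn o3 mul1r. Qed.

Lemma eq_cubes (y z : F) : y ^+ 3 = z ^+ 3 -> [\/ y = z, y = o * z | y = o ^+ 2 * z].
Proof.
move=> e; have /eqP : (y - z) * (y - o * z) * (y - o ^+ 2 * z) = 0.
  by apply: (eq_sub_eq0 e); ring: omega_sqr.
by rewrite !mulf_eq0 !subr_eq0 => /orP [/orP [] | ] /eqP;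
  [constructor 1 | constructor 2 | constructor 3].
Qed.

Lemma uniq_omega_orbit (y : F) : y != 0 -> uniq [:: y; o * y; o ^+ 2 * y].
Proof.
move=> y_neq0.
have -> : [:: y; o * y; o ^+ 2 * y] = [seq c * y | c <- [:: 1; o; o ^+ 2]] by rewrite /= mul1r.
rewrite (map_inj_uniq (mulIf y_neq0)) /= !inE !negb_or !(eq_sym 1) o_neq1 omega_sqr_neq1.
by rewrite eq_sym omega_sqr_neq.
Qed.

Lemma hess_rho_omega (x : F) : hess_rho (o * x) = o * hess_rho x.
Proof. by rewrite /hess_rho cubeM_omega !mulrA. Qed.

Lemma hess_tau_admissible (x : F) : x ^+ 3 != 27 -> hess_tau x ^+ 3 != 27.
Proof.
rewrite cube_neq27E => /andP [x_neq3 B_neq0]; have x3 : x - 3 != 0 by rewrite subr_eq0.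
rewrite -subr_eq0 (_ : _ - _ = 3 ^+ 6 * (x ^+ 2 + 3 * x + 9) / (x - 3) ^+ 3).
  by rewrite !mulf_neq0 ?invr_eq0 ?expf_neq0 // omega_three_neq0.
by rewrite /hess_tau; field.
Qed.

Lemma hess_rho_tau (x : F) : x ^+ 3 != 27 -> hess_rho (hess_tau x) = hess_rho x.
Proof.
move=> hx; have := hx; rewrite cube_neq27E => /andP [x_neq3 B_neq0].
have x3 : x - 3 != 0 by rewrite subr_eq0.
have x27 : x ^+ 3 - 27 != 0 by rewrite subr_eq0.
have t27 : hess_tau x ^+ 3 - 27 != 0 by rewrite subr_eq0 hess_tau_admissible.
rewrite /hess_rho; apply/eqP; rewrite eqr_div //; apply/eqP.
by rewrite /hess_tau; field; rewrite x3.
Qed.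

Definition hess_fibre (x : F) : seq F :=
  [:: x; hess_tau x; o * hess_tau (o ^+ 2 * x); o ^+ 2 * hess_tau (o * x)].

Lemma cubeM_omega2 (x : F) : (o ^+ 2 * x) ^+ 3 = x ^+ 3.
Proof. by rewrite expr2 -mulrA !cubeM_omega. Qed.

Lemma hess_rho_omega2 (x : F) : hess_rho (o ^+ 2 * x) = o ^+ 2 * hess_rho x.
Proof. by rewrite expr2 -!mulrA !hess_rho_omega. Qed.

Lemma hess_fibreP (u v : F) : u ^+ 3 != 27 ->
  (v ^+ 3 != 27) && (hess_rho v == hess_rho u) = (v \in hess_fibre u).
Proof.
move=> hu; have u3 : u - 3 != 0 by move: hu; rewrite cube_neq27E subr_eq0 => /andP [].
have u3' : o ^+ 2 * u - 3 != 0.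
  by move: hu; rewrite -cubeM_omega2 cube_neq27E subr_eq0 => /andP [].
have u3'' : o * u - 3 != 0 by move: hu; rewrite -cubeM_omega cube_neq27E subr_eq0 => /andP [].
apply/andP/idP => [[hv /eqP e] | ].
  have : (v - u) * (v * (u - 3) - 3 * (u + 6))
       * (v * (o ^+ 2 * u - 3) - o * (3 * (o ^+ 2 * u + 6)))
       * (v * (o * u - 3) - o ^+ 2 * (3 * (o * u + 6))) = 0.
    move: e; rewrite /hess_rho => /eqP; rewrite eqr_div ?subr_eq0 // => /eqP e.
    by apply: (eq_sub_eq0 e); ring: omega_sqr.
  have solve (d n : F) : d != 0 -> v * d - n = 0 -> v = n / d.
    by move=> d_neq0 /subr0_eq <-; rewrite mulfK.
  move/eqP; rewrite !mulf_eq0 -!orbA !inE /hess_tau !mulrA => /or4P [] /eqP f.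
  - by rewrite (subr0_eq f) eqxx.
  - by rewrite (solve _ _ u3 f) eqxx orbT.
  - by rewrite (solve _ _ u3' f) eqxx !orbT.
  - by rewrite (solve _ _ u3'' f) eqxx !orbT.
rewrite !inE => /or4P [] /eqP ->.
- by rewrite hu eqxx.
- by rewrite hess_tau_admissible // hess_rho_tau // eqxx.
- rewrite cubeM_omega hess_tau_admissible ?cubeM_omega2 //.
  by rewrite hess_rho_omega hess_rho_tau ?cubeM_omega2 // hess_rho_omega2 mulrA -exprS o3 mul1r.
- rewrite cubeM_omega2 hess_tau_admissible ?cubeM_omega //.
  by rewrite hess_rho_omega2 hess_rho_tau ?cubeM_omega // hess_rho_omega mulrA -exprSr o3 mul1r.
Qed.

Lemma hess_branch_factor (x : F) : hess_branch x =
  (x ^+ 2 - 6 * x - 18) * (x ^+ 2 - 6 * o * x - 18 * o ^+ 2) * (x ^+ 2 - 6 * o ^+ 2 * x - 18 * o).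
Proof. by rewrite /hess_branch; ring: omega_sqr. Qed.

Lemma hess_fibre_frac (x : F) : hess_fibre x =
  [:: x / 1; 3 * (x + 6) / (x - 3); o * 3 * (o ^+ 2 * x + 6) / (o ^+ 2 * x - 3);
      o ^+ 2 * 3 * (o * x + 6) / (o * x - 3)].
Proof. by rewrite /hess_fibre /hess_tau divr1 !mulrA. Qed.

Lemma frac_neq (c q n1 d1 n2 d2 : F) : c != 0 -> q != 0 -> d1 != 0 -> d2 != 0 ->
  n1 * d2 - n2 * d1 = c * q -> n1 / d1 != n2 / d2.
Proof. by move=> c_neq0 q_neq0 d1_neq0 d2_neq0 e; rewrite eqr_div // -subr_eq0 e mulf_neq0. Qed.

Lemma uniq_hess_fibre (x : F) : x ^+ 3 != 27 -> hess_branch x != 0 -> uniq (hess_fibre x).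
Proof.
move=> hx; rewrite hess_branch_factor !mulf_eq0 !negb_or => /andP [/andP [q1 q2] q3].
have d0 := oner_neq0 F; have three := omega_three_neq0.
have d1 : x - 3 != 0 by move: hx; rewrite cube_neq27E subr_eq0 => /andP [].
have d2 : o ^+ 2 * x - 3 != 0.
  by move: hx; rewrite -cubeM_omega2 cube_neq27E subr_eq0 => /andP [].
have d3 : o * x - 3 != 0 by move: hx; rewrite -cubeM_omega cube_neq27E subr_eq0 => /andP [].
have c2 : o ^+ 2 != 0 by rewrite expf_neq0 // omega_neq0.
have c12 : 3 * (o ^+ 2 - 1) != 0 by rewrite mulf_neq0 ?subr_eq0 ?omega_sqr_neq1.
have c13 : 3 * (o - 1) != 0 by rewrite mulf_neq0 ?subr_eq0.
have c23 : 3 * (o - o ^+ 2) != 0 by rewrite mulf_neq0 // subr_eq0 eq_sym omega_sqr_neq.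
rewrite hess_fibre_frac /= !inE !negb_or !andbT -!andbA.
apply/and5P; split; [ | | | | apply/andP; split].
- by apply: (frac_neq d0 q1 d0 d1); ring.
- by apply: (frac_neq c2 q2 d0 d2); ring: omega_sqr.
- by apply: (frac_neq omega_neq0 q3 d0 d3); ring: omega_sqr.
- by apply: (frac_neq c12 q3 d1 d2); ring: omega_sqr.
- by apply: (frac_neq c13 q2 d1 d3); ring: omega_sqr.
- by apply: (frac_neq c23 q1 d2 d3); ring: omega_sqr.
Qed.

Lemma hess_fibre_nontrivial (x : F) : (2 : F) != 0 -> x ^+ 3 != 27 ->
  (hess_tau x != x) || (o * hess_tau (o ^+ 2 * x) != x).
Proof.
move=> two hx; have three := omega_three_neq0.
have d1 : x - 3 != 0 by move: hx; rewrite cube_neq27E subr_eq0 => /andP [].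
have d2 : o ^+ 2 * x - 3 != 0.
  by move: hx; rewrite -cubeM_omega2 cube_neq27E subr_eq0 => /andP [].
rewrite -negb_and; apply/andP => -[/eqP t1 /eqP t2].
have q1 : x ^+ 2 - 6 * x - 18 = 0.
  apply: (eq_sub_eq0 (_ : x * (x - 3) = 3 * (x + 6))); last by ring.
  by rewrite -{1}t1 /hess_tau divfK.
have q2 : x ^+ 2 - 6 * o * x - 18 * o ^+ 2 = 0.
  apply/eqP; rewrite -(mulIr_eq0 _ (mulIf (expf_neq0 2 omega_neq0))) /=; apply/eqP.
  apply: (eq_sub_eq0 (_ : x * (o ^+ 2 * x - 3) = o * (3 * (o ^+ 2 * x + 6))));
    last by ring: omega_sqr.
  by rewrite -{1}t2 /hess_tau -mulrA divfK.
have /eqP : 6 * (o - 1) * (x - 3 * o ^+ 2) = 0.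
  rewrite (_ : _ * _ = (x ^+ 2 - 6 * x - 18) - (x ^+ 2 - 6 * o * x - 18 * o ^+ 2)).
    by rewrite q1 q2 subr0.
  by ring: omega_sqr.
rewrite !mulf_eq0 subr_eq0 (negbTE o_neq1) /= orbF.
rewrite (_ : 6 = 2 * 3); last by ring.
rewrite mulf_eq0 (negbTE two) (negbTE three) /= subr_eq0 => /eqP xo.
have t27 : (27 : F) != 0 by rewrite (_ : 27 = 3 ^+ 3); [exact: expf_neq0 | ring].
move: q1; rewrite (_ : _ - _ - _ = (x - 3 * o ^+ 2) * (x + 3 * o ^+ 2 - 6) + 27 * o).
  by rewrite xo subrr mul0r add0r => /eqP; rewrite mulf_eq0 (negbTE t27) (negbTE omega_neq0).
by ring: omega_sqr.
Qed.

End CubeRootOfUnity.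

Lemma hess_branch_char2 (F : fieldType) (x : F) : (2 : F) = 0 -> hess_branch x = 0 -> x = 0.
Proof.
move=> two0; rewrite /hess_branch.
rewrite (_ : _ - _ - _ = x ^+ 6 - 2 * (270 * x ^+ 3 + 2916)); last by ring.
by rewrite two0 mul0r subr0 => /eqP; rewrite expf_eq0 /= => /eqP.
Qed.

Definition hess_rho_fibre (F : finFieldType) (y : F) : {set F} :=
  [set v in hess_params F | hess_rho v == y].

Definition hess_branch_params (F : finFieldType) : {set F} :=
  [set x in hess_params F | hess_branch x == 0].

Section Fibres.
Variable F : finFieldType.

Lemma card_hess_params_sum :
  #|hess_params F| = (\sum_(y in hess_rho @: hess_params F) #|hess_rho_fibre y|)%N.
Proof.
rewrite -sum1_card (partition_big_imset hess_rho) /=.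
by apply: eq_bigr => y _; rewrite -sum1_card; apply: eq_bigl => v; rewrite !inE.
Qed.

Lemma card_hess_branch_params_sum : #|hess_branch_params F| =
  (\sum_(y in hess_rho @: hess_params F) #|hess_rho_fibre y :&: hess_branch_params F|)%N.
Proof.
rewrite -sum1_card (partition_big hess_rho (mem (hess_rho @: hess_params F))) /=; last first.
  by move=> x; rewrite inE => /andP [hx _]; apply: imset_f.
apply: eq_bigr => y _; rewrite -sum1_card; apply: eq_bigl => v; rewrite !inE.
by case: (v ^+ 3 != 27); rewrite /= ?andbF // andbC.
Qed.

Lemma card_hess_branch_params : (#|hess_branch_params F| <= 6)%N.
Proof.
pose c (i : nat) : F :=
  if i == 6%N then 1 else if i == 3%N then -540 else if i == 0%N then -5832 else 0.
pose p := \poly_(i < 7) c i.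
have p_neq0 : p != 0.
  by apply/eqP => /(congr1 (coefp 6)); rewrite /= coef_poly coef0 /= /c /=; apply/eqP/oner_neq0.
have : all (root p) (enum (hess_branch_params F)).
  apply/allP => x; rewrite mem_enum !inE => /andP [_ /eqP b0].
  rewrite /root horner_poly !big_ord_recr big_ord0 /= /c /=; apply/eqP.
  by rewrite -[RHS]b0 /hess_branch; ring.
move/(max_poly_roots p_neq0)/(_ (enum_uniq _)); rewrite -cardE => /leq_trans.
by move/(_ _ (size_poly 7 c)).
Qed.

Lemma card_hess_branch_params_char2 : (2 : F) = 0 -> (#|hess_branch_params F| <= 1)%N.
Proof.
move=> two0; rewrite -(cards1 (0 : F)); apply/subset_leq_card/subsetP => x.
by rewrite !inE => /andP [_ /eqP /(hess_branch_char2 two0) ->].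
Qed.

End Fibres.

(* A fibre of [hess_rho] with fewer than four points has at least two of them, except
   in characteristic 2 where it is the single branch point 0. *)
Definition deficiency_weight (F : finFieldType) : nat := if (2 : F) == 0 then 3 else 1.

Section HessianClassesOmega.
Variable F : finFieldType.
Variable o : F.
Hypothesis o3 : o ^+ 3 = 1.
Hypothesis o_neq1 : o != 1.

Lemma hess_iso_omega (x : F) : hess_iso x (o * x).
Proof.
apply/hess_isoP; do 4 eexists; split; last exact: hess_change_omega o3 o_neq1 x.
by rewrite expf_neq0 // omega_neq0.
Qed.

Lemma hess_iso_tau (x : F) : x ^+ 3 != 27 -> hess_iso x (hess_tau x).
Proof.
rewrite cube_neq27E => /andP [x_neq3 _]; apply/hess_isoP.
exists ((1 + 2 * o) * (3 - x) / 9), (- (x ^+ 2 + 3 * x + 9) / 3), (- 3 + o ^+ 2 * x),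
  (3 - 3 * o + 3 * x + x ^+ 2 + (2 + o) * x ^+ 3 / 9).
split; last exact (hess_change_tau o3 o_neq1 x_neq3).
have three := omega_three_neq0 o3 o_neq1.
have o12 : 1 + 2 * o != 0.
  apply: contra_neq three => o12.
  rewrite (_ : 3 = - (1 + 2 * o) ^+ 2); last by ring: (omega_sqr o3 o_neq1).
  by rewrite o12 expr2 mulr0 oppr0.
have nine : (9 : F) != 0 by rewrite (_ : 9 = 3 * 3); [exact: mulf_neq0 | ring].
by rewrite !mulf_neq0 ?invr_eq0 // subr_eq0 eq_sym.
Qed.

Lemma hess_iso_fibre (u v : F) : u ^+ 3 != 27 -> v \in hess_fibre o u -> hess_iso u v.
Proof.
move=> hu; have iso2 x : hess_iso x (o ^+ 2 * x).
  by rewrite expr2 -mulrA; apply: hess_iso_trans (hess_iso_omega _) (hess_iso_omega _).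
rewrite !inE => /or4P [] /eqP ->.
- exact: hess_iso_refl.
- exact: hess_iso_tau.
- apply: hess_iso_trans (iso2 u) _; apply: hess_iso_trans (hess_iso_tau _) (hess_iso_omega _).
  by rewrite (cubeM_omega2 o3).
- apply: hess_iso_trans (hess_iso_omega u) _; apply: hess_iso_trans (hess_iso_tau _) (iso2 _).
  by rewrite (cubeM_omega o3).
Qed.

Lemma hess_isoE (u v : F) : u ^+ 3 != 27 -> v ^+ 3 != 27 ->
  hess_iso u v = (hess_rho u ^+ 3 == hess_rho v ^+ 3).
Proof.
move=> hu hv; apply/idP/eqP => [|e]; first exact: hess_iso_rho.
have fibre x : x ^+ 3 != 27 -> hess_rho v = hess_rho x -> hess_iso x v.
  move=> hx e'; apply: (hess_iso_fibre hx).
  by rewrite -(hess_fibreP o3 o_neq1 v hx); apply/andP; split; [exact: hv | rewrite e'].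
case: (eq_cubes o3 o_neq1 (esym e)) => e'.
- exact: fibre.
- apply: hess_iso_trans (hess_iso_omega u) (fibre _ _ _); first by rewrite (cubeM_omega o3).
  by rewrite (hess_rho_omega o3).
- apply: hess_iso_trans (hess_iso_omega u) _.
  apply: hess_iso_trans (hess_iso_omega _) (fibre _ _ _); first by rewrite !(cubeM_omega o3).
  by rewrite !(hess_rho_omega o3) mulrA -expr2.
Qed.

Lemma I_H_rho_cubes : I_H F = #|[set y ^+ 3 | y in hess_rho @: hess_params F]|.
Proof.
rewrite /I_H.
have -> : [set [set v in hess_params F | hess_iso u v] | u in hess_params F] =
    [set [set v in hess_params F | hess_rho v ^+ 3 == z] | z in
       [set hess_rho u ^+ 3 | u in hess_params F]].
  rewrite -imset_comp; apply: eq_in_imset => u; rewrite inE => hu /=; apply/setP => v.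
  by rewrite !inE; case hv: (v ^+ 3 != 27) => //=; rewrite hess_isoE.
rewrite card_in_imset -?imset_comp // => _ z /imsetP [u hu ->] _ /setP /(_ u).
by rewrite inE in hu; rewrite !inE hu eqxx => /esym/eqP.
Qed.

Lemma card_cubes (Y : {set F}) : 0 \in Y -> {in Y, forall y, o * y \in Y} ->
  (#|Y| + 2 = 3 * #|[set y ^+ 3 | y in Y]|)%N.
Proof.
move=> Y0 Yo; set Z := [set y ^+ 3 | y in Y].
have cube_fibre z : z \in Z -> #|[set y in Y | y ^+ 3 == z]| = if z == 0 then 1%N else 3.
  case/imsetP=> y yY ->{z}; have [-> | y_neq0] := eqVneq y 0.
    rewrite expr0n eqxx -(cards1 (0 : F)); apply: eq_card => x.
    by rewrite !inE expf_eq0 /=; case: eqP => [-> | _]; rewrite ?Y0 ?andbF.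
  have /card_uniqP orbit3 := uniq_omega_orbit o3 o_neq1 y_neq0.
  rewrite expf_eq0 (negbTE y_neq0) /=; apply: etrans orbit3; apply: eq_card => x.
  rewrite !inE; apply/andP/idP => [[_ /eqP /(eq_cubes o3 o_neq1) [] ->] | ]; rewrite ?eqxx ?orbT //.
  have oyY := Yo _ yY; have o2yY : o ^+ 2 * y \in Y by rewrite expr2 -mulrA Yo.
  by case/or3P=> /eqP ->; rewrite ?yY ?oyY ?o2yY ?(cubeM_omega o3) ?(cubeM_omega2 o3).
have Z0 : 0 \in Z by apply/imsetP; exists 0; rewrite ?expr0n.
have -> : #|Y| = (\sum_(z in Z) if z == 0%R then 1 else 3)%N.
  rewrite -sum1_card (partition_big_imset (fun y => y ^+ 3)) /=.
  apply: eq_bigr => z zZ; rewrite -cube_fibre // -sum1_card.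
  by apply: eq_bigl => y; rewrite inE.
rewrite (bigD1 0) //= eqxx (eq_bigr (fun _ => 3%N)); last by move=> z /andP [_ /negbTE ->].
rewrite sum_nat_cond_const (cardsD1 0 Z) Z0.
rewrite (_ : [set x | (x \in Z) && (x != 0)] = Z :\ 0); last by apply/setP => x; rewrite !inE andbC.
by rewrite /=; set k := #|Z :\ 0|; lia.
Qed.

Lemma card_hess_params_omega : (#|hess_params F| + 3 = #|F|)%N.
Proof.
rewrite -(cardsC (hess_params F)); congr (_ + _)%N.
have /card_uniqP orbit3 := uniq_omega_orbit o3 o_neq1 (omega_three_neq0 o3 o_neq1).
apply/esym; apply: etrans orbit3; apply: eq_card => x.
rewrite !inE negbK (_ : 27 = 3 ^+ 3); last by ring.
apply/eqP/idP => [/(eq_cubes o3 o_neq1) [] -> | /or3P [] /eqP ->]; rewrite ?eqxx ?orbT //.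
- by rewrite (cubeM_omega o3).
- by rewrite (cubeM_omega2 o3).
Qed.

Lemma hess_rho_fibreE (u : F) : u \in hess_params F ->
  hess_rho_fibre (hess_rho u) = [set v in hess_fibre o u].
Proof.
rewrite inE => hu; apply/setP => v.
by rewrite in_set [in RHS]in_set -(hess_fibreP o3 o_neq1 v hu) inE.
Qed.

Lemma card_hess_rho_fibre_le4 (y : F) : y \in hess_rho @: hess_params F ->
  (#|hess_rho_fibre y| <= 4)%N.
Proof. by case/imsetP=> u hu ->; rewrite hess_rho_fibreE // cardsE card_size. Qed.

Lemma card_hess_rho_fibre_ge2 (u : F) : (2 : F) != 0 -> u \in hess_params F ->
  (2 <= #|hess_rho_fibre (hess_rho u)|)%N.
Proof.
move=> two hu; rewrite hess_rho_fibreE //.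
have two_elts w : w \in hess_fibre o u -> w != u -> (2 <= #|[set v in hess_fibre o u]|)%N.
  move=> wF w_neq_u; apply: leq_trans (subset_leq_card (_ : [set u; w] \subset _)).
    by rewrite cards2 eq_sym w_neq_u.
  by apply/subsetP => v; rewrite in_set2 in_set => /orP [] /eqP -> //; apply: mem_head.
rewrite inE in hu; case/orP: (hess_fibre_nontrivial o3 o_neq1 two hu) => /two_elts-> //.
  by rewrite !inE eqxx orbT.
by rewrite !inE eqxx !orbT.
Qed.

Lemma hess_rho_fibre_deficiency (y : F) : y \in hess_rho @: hess_params F ->
  (4 <= #|hess_rho_fibre y|
        + deficiency_weight F * #|hess_rho_fibre y :&: hess_branch_params F|)%N.
Proof.
case/imsetP=> u hu ->.
have [-> // | deficient] := eqVneq #|hess_rho_fibre (hess_rho u)| 4.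
have -> : hess_rho_fibre (hess_rho u) :&: hess_branch_params F = hess_rho_fibre (hess_rho u).
  apply/setIidPl/subsetP => v v_fib; have := v_fib; rewrite !inE => /andP [hv /eqP e].
  rewrite hv /=; apply: contraR deficient => b_neq0.
  have v_par : v \in hess_params F by rewrite inE.
  rewrite -e (hess_rho_fibreE v_par) cardsE; apply/eqP/card_uniqP.
  exact (uniq_hess_fibre o3 o_neq1 hv b_neq0).
rewrite /deficiency_weight; case: eqP => [two0 | /eqP two].
  have : (0 < #|hess_rho_fibre (hess_rho u)|)%N.
    by apply/card_gt0P; exists u; rewrite in_set hu eqxx.
  by lia.
by have := card_hess_rho_fibre_ge2 two hu; lia.
Qed.

Lemma I_H_omega : I_H F = ((#|F| + 11) %/ 12)%N.
Proof.
set Y := hess_rho @: hess_params F.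
have Y0 : 0 \in Y.
  apply/imsetP; exists 0; last by rewrite /hess_rho !mul0r.
  rewrite inE expr0n eq_sym (_ : 27 = 3 ^+ 3); last by ring.
  by rewrite expf_neq0 // (omega_three_neq0 o3 o_neq1).
have Yo : {in Y, forall y, o * y \in Y}.
  move=> _ /imsetP [u hu ->]; rewrite -(hess_rho_omega o3); apply: imset_f.
  by move: hu; rewrite !inE (cubeM_omega o3).
have le4 : (#|hess_params F| <= 4 * #|Y|)%N.
  rewrite card_hess_params_sum mulnC -sum_nat_const leq_sum // => y.
  exact: card_hess_rho_fibre_le4.
have ge4 : (4 * #|Y| <= #|hess_params F|
                         + deficiency_weight F * #|hess_branch_params F|)%N.
  rewrite card_hess_params_sum card_hess_branch_params_sum big_distrr -big_split /=.
  by rewrite mulnC -sum_nat_const leq_sum // => y; apply: hess_rho_fibre_deficiency.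
have branch : (deficiency_weight F * #|hess_branch_params F| <= 6)%N.
  rewrite /deficiency_weight; case: eqP => [two0 | _].
    by have := card_hess_branch_params_char2 two0; lia.
  by rewrite mul1n card_hess_branch_params.
have := card_cubes Y0 Yo; have := card_hess_params_omega; rewrite I_H_rho_cubes -/Y.
move: le4 ge4 branch; set k := (_ * #|hess_branch_params F|)%N.
by move: #|hess_params F| #|Y| #|[set _ ^+ 3 | _ in Y]| #|F| k; lia.
Qed.

End HessianClassesOmega.

Section HessianClassesRigid.
Variable F : finFieldType.
Hypothesis no_omega : forall z : F, z ^+ 3 = 1 -> z = 1.

Lemma hess_iso_rigid (u v : F) : u \in hess_params F -> hess_iso u v -> v = u.
Proof.
rewrite inE => hu /hess_isoP [w [r [s [t [w_neq0 huv]]]]].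
have [three0 | three_neq0] := eqVneq (3 : F) 0.
  apply: (hess_change_char3 three0 _ huv); apply: contraNneq hu => ->.
  by rewrite expr0n (_ : 27 = 3 * 9); [rewrite three0 mul0r | ring].
exact (hess_change_rigid no_omega three_neq0 hu w_neq0 huv).
Qed.

Lemma I_H_rigid : I_H F = (#|F| - 1)%N.
Proof.
have -> : I_H F = #|hess_params F|.
  rewrite /I_H (eq_in_imset (g := set1)) ?card_imset //; first exact: set1_inj.
  move=> u hu; apply/setP => v; rewrite !inE.
  apply/andP/eqP => [[_ /(hess_iso_rigid hu)] // | ->].
  by move: hu; rewrite inE => hu; split => //; apply: hess_iso_refl.
rewrite -(cardsC (hess_params F)) (_ : ~: hess_params F = [set 3]) ?cards1 ?addnK //.
by apply/setP => x; rewrite !inE negbK (cube_eq27 no_omega).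
Qed.

End HessianClassesRigid.

Lemma card_mod3P (F : finFieldType) :
  reflect (exists2 o : F, o ^+ 3 = 1 & o != 1) (#|F| %% 3 == 1)%N.
Proof.
apply: (iffP eqP) => [q_mod3 | [o o3 o_neq1]].
  have : (3 %| #|[set: {unit F}]|)%N.
    by rewrite card_finField_unit (divn_eq #|F| 3) q_mod3 addn1 /= dvdn_mull.
  case/(Cauchy (isT : prime 3)) => x _ x_order; exists (val x).
    by rewrite -val_unitX -x_order expg_order.
  apply: contra_eq_neq x_order => x1; rewrite (_ : x = 1%g) ?order1 //.
  by apply: val_inj; rewrite x1.
have := expf_card o; rewrite {1}(divn_eq #|F| 3) exprD mulnC exprM o3 expr1n mul1r.
have := ltn_pmod #|F| (isT : (0 < 3)%N).
case: (#|F| %% 3)%N => [|[|[|n]]] // _ => [/esym | o2].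
  by move/eqP; rewrite (negbTE o_neq1).
by move: (omega_sqr_neq o3 o_neq1); rewrite o2 eqxx.
Qed.

Theorem mainTheorem13 (F : finFieldType) :
  I_H F = (if #|F| %% 3 == 1 then (#|F| + 11) %/ 12 else #|F| - 1)%N.
Proof.
case: card_mod3P => [[o o3 o_neq1] | no_omega]; first exact: I_H_omega o3 o_neq1.
apply: I_H_rigid => z z3; apply/eqP/negPn/negP => z_neq1.
by apply: no_omega; exists z.
Qed.
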